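(* Let $(a_0,\ldots,a_n)$ be a finite sequence of positive integers and $m\ge 1$ an integer. Then $\lim_{N\to\infty}\Phi(\beta^N)=\infty$.
   Context: For positive integers $d_0,d_1,\ldots$, $[d_0,d_1,d_2,\ldots]$ denotes the continued fraction $\cfrac{1}{d_0+\cfrac{1}{d_1+\cfrac{1}{d_2+\cdots}}}$, and for $\beta=[d_0,d_1,\ldots]$ we write $\alpha_j(\beta)=[d_j,d_{j+1},\ldots]$. $\Phi(\beta)=\sum_{k\ge 0}\alpha_0(\beta)\cdots\alpha_{k-1}(\beta)\log\frac{1}{\alpha_k(\beta)}$ is the Yoccoz Brjuno function. For $N\ge1$, $\beta^N$ is the number whose digits (indexed from $0$) are $a_0,\ldots,a_n$ in positions $0,\ldots,n$, $N$ in position $n+m$, and $1$ in all other positions. *)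

From Stdlib Require Import Reals Lra Lia.
From Coquelicot Require Import Coquelicot.
Open Scope R_scope.

(* Finite truncation of the continued fraction
   [d_0, d_1, ...] = 1/(d_0 + 1/(d_1 + ...)) at depth k (tail replaced by 0). *)
Fixpoint cf_fin (d : nat -> nat) (k : nat) : R :=
  match k with
  | O => 0
  | S k' => / (INR (d O) + cf_fin (fun i => d (S i)) k')
  end.

Definition cf_val (d : nat -> nat) : R := real (Lim_seq (fun k => cf_fin d k)).

(* alpha_j(beta) = [d_j, d_{j+1}, ...] where beta = [d_0, d_1, ...]. *)
Definition alpha (d : nat -> nat) (j : nat) : R := cf_val (fun i => d (j + i)%nat).

Fixpoint alpha_prod (d : nat -> nat) (k : nat) : R :=
  match k with
  | O => 1
  | S k' => alpha_prod d k' * alpha d k'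
  end.

Definition Phi (d : nat -> nat) : Rbar :=
  Lim_seq (sum_n (fun k => alpha_prod d k * ln (/ alpha d k))).

(* Digits of beta^N: a_0..a_n at positions 0..n, N at position n+m, 1 elsewhere. *)
Definition beta_digits (a : nat -> nat) (n m N : nat) (i : nat) : nat :=
  if (i <=? n)%nat then a i
  else if Nat.eqb i (n + m)%nat then N else 1%nat.

From Stdlib Require Import Reals Lra Lia.
From Coquelicot Require Import Coquelicot.
Open Scope R_scope.

(* Phi is bounded below by its (n+m)-th term alpha_0 ... alpha_{n+m-1} log (1/alpha_{n+m}).
   Since 1/(d_j + 1) <= alpha_j <= 1/d_j, the product is at least
   c = prod_{j < n+m} 1/(d_j + 1), a positive constant because the digits below position
   n+m do not depend on N, while 1/alpha_{n+m} >= N.  Hence Phi(beta^N) >= c log N. *)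

Definition digits_pos (d : nat -> nat) : Prop := forall i, (1 <= d i)%nat.

Lemma one_le_INR (k : nat) : (1 <= k)%nat -> 1 <= INR k.
Proof. intro Hk. apply (le_INR 1 k) in Hk. simpl in Hk. lra. Qed.

Lemma cf_fin_bounds (k : nat) : forall d, digits_pos d -> 0 <= cf_fin d k <= 1.
Proof.
  induction k as [|k IH]; intros d Hd; simpl; [lra|].
  assert (Hd0 := one_le_INR _ (Hd O)).
  destruct (IH (fun i => d (S i))) as [Hlo Hhi]; [intro; apply Hd|].
  split.
  - left. apply Rinv_0_lt_compat. lra.
  - rewrite <- Rinv_1. apply Rinv_le_contravar; lra.
Qed.

Lemma cf_fin_S_bounds (d : nat -> nat) (k : nat) : digits_pos d ->
  / (INR (d O) + 1) <= cf_fin d (S k) <= / INR (d O).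
Proof.
  intro Hd. simpl.
  assert (Hd0 := one_le_INR _ (Hd O)).
  destruct (cf_fin_bounds k (fun i => d (S i))) as [Hlo Hhi]; [intro; apply Hd|].
  split; apply Rinv_le_contravar; lra.
Qed.

(* No convergence of the convergents is needed: their Lim_seq is squeezed between two
   constants, which in particular makes it finite. *)
Lemma cf_val_bounds (d : nat -> nat) : digits_pos d ->
  / (INR (d O) + 1) <= cf_val d <= / INR (d O).
Proof.
  intro Hd. unfold cf_val.
  assert (Hlo : Rbar_le (Lim_seq (fun _ => / (INR (d O) + 1))) (Lim_seq (cf_fin d))).
  { apply Lim_seq_le_loc. exists 1%nat. intros [|k] Hk; [lia|].
    apply cf_fin_S_bounds; exact Hd. }
  assert (Hhi : Rbar_le (Lim_seq (cf_fin d)) (Lim_seq (fun _ => / INR (d O)))).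
  { apply Lim_seq_le_loc. exists 1%nat. intros [|k] Hk; [lia|].
    apply cf_fin_S_bounds; exact Hd. }
  rewrite Lim_seq_const in Hlo, Hhi.
  destruct (Lim_seq (cf_fin d)); simpl in *; try contradiction. lra.
Qed.

Fixpoint prod_inv_succ_digits (d : nat -> nat) (k : nat) : R :=
  match k with
  | O => 1
  | S k' => prod_inv_succ_digits d k' * / (INR (d k') + 1)
  end.

Lemma inv_succ_digit_pos (d : nat -> nat) (j : nat) : 0 < / (INR (d j) + 1).
Proof. apply Rinv_0_lt_compat. pose proof (pos_INR (d j)). lra. Qed.

Lemma prod_inv_succ_digits_pos (d : nat -> nat) (k : nat) : 0 < prod_inv_succ_digits d k.
Proof.
  induction k as [|k IH]; simpl; [lra|].
  apply Rmult_lt_0_compat; [exact IH | apply inv_succ_digit_pos].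
Qed.

Lemma prod_inv_succ_digits_ext (d e : nat -> nat) (k : nat) :
  (forall j, (j < k)%nat -> d j = e j) ->
  prod_inv_succ_digits d k = prod_inv_succ_digits e k.
Proof.
  induction k as [|k IH]; intro Hde; simpl; [reflexivity|].
  rewrite IH, (Hde k); [reflexivity | lia |].
  intros j Hj. apply Hde. lia.
Qed.

Lemma sum_n_ge_term (f : nat -> R) : (forall k, 0 <= f k) ->
  forall n K, (K <= n)%nat -> f K <= sum_n f n.
Proof.
  intros Hf n. induction n as [|n IH]; intros K HK.
  - replace K with O by lia. rewrite sum_O. lra.
  - rewrite sum_Sn. unfold plus; simpl.
    destruct (Nat.eq_dec K (S n)) as [-> | HneK].
    + (* the earlier partial sum is nonnegative because it dominates f 0 *)
      pose proof (IH O (Nat.le_0_l n)). pose proof (Hf O). lra.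
    + assert (HKn : (K <= n)%nat) by lia.
      pose proof (IH K HKn). pose proof (Hf (S n)). lra.
Qed.

Lemma Lim_seq_sum_n_ge_term (f : nat -> R) (K : nat) : (forall k, 0 <= f k) ->
  Rbar_le (f K) (Lim_seq (sum_n f)).
Proof.
  intro Hf. rewrite <- (Lim_seq_const (f K)).
  apply Lim_seq_le_loc. exists K. intros n Hn. apply sum_n_ge_term; assumption.
Qed.

Section PositiveDigits.

Variable d : nat -> nat.
Hypothesis d_pos : digits_pos d.

Lemma alpha_bounds (j : nat) : / (INR (d j) + 1) <= alpha d j <= / INR (d j).
Proof.
  pose proof (cf_val_bounds (fun i => d (j + i)%nat) (fun i => d_pos _)) as H.
  simpl in H. rewrite Nat.add_0_r in H. exact H.
Qed.

Lemma alpha_pos (j : nat) : 0 < alpha d j.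
Proof.
  eapply Rlt_le_trans; [apply inv_succ_digit_pos | apply alpha_bounds].
Qed.

Lemma ln_digit_le_ln_inv_alpha (j : nat) : ln (INR (d j)) <= ln (/ alpha d j).
Proof.
  assert (Hdj := one_le_INR _ (d_pos j)).
  apply ln_le; [lra|].
  rewrite <- (Rinv_inv (INR (d j))).
  apply Rinv_le_contravar; [apply alpha_pos | apply alpha_bounds].
Qed.

Lemma ln_inv_alpha_nonneg (j : nat) : 0 <= ln (/ alpha d j).
Proof.
  rewrite <- ln_1. eapply Rle_trans; [| apply ln_digit_le_ln_inv_alpha].
  apply ln_le; [lra | apply one_le_INR, d_pos].
Qed.

Lemma prod_inv_succ_digits_le_alpha_prod (k : nat) :
  prod_inv_succ_digits d k <= alpha_prod d k.
Proof.
  induction k as [|k IH]; simpl; [lra|].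
  apply Rmult_le_compat; [apply Rlt_le, prod_inv_succ_digits_pos
    | apply Rlt_le, inv_succ_digit_pos | exact IH | apply alpha_bounds].
Qed.

Lemma Phi_ge_term (k : nat) : Rbar_le (alpha_prod d k * ln (/ alpha d k)) (Phi d).
Proof.
  apply (Lim_seq_sum_n_ge_term (fun j => alpha_prod d j * ln (/ alpha d j))).
  intro j. apply Rmult_le_pos; [| apply ln_inv_alpha_nonneg].
  eapply Rle_trans; [apply Rlt_le, prod_inv_succ_digits_pos
    | apply prod_inv_succ_digits_le_alpha_prod].
Qed.

Lemma Phi_ge_ln_digit (k : nat) :
  Rbar_le (prod_inv_succ_digits d k * ln (INR (d k))) (Phi d).
Proof.
  eapply Rbar_le_trans; [| apply Phi_ge_term]. simpl.
  assert (Hdk := one_le_INR _ (d_pos k)).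
  assert (0 <= ln (INR (d k))) by (rewrite <- ln_1; apply ln_le; lra).
  apply Rmult_le_compat; [apply Rlt_le, prod_inv_succ_digits_pos | assumption
    | apply prod_inv_succ_digits_le_alpha_prod | apply ln_digit_le_ln_inv_alpha].
Qed.

End PositiveDigits.

Lemma beta_digits_pos (a : nat -> nat) (n m N : nat) :
  (forall i, (i <= n)%nat -> (0 < a i)%nat) -> (1 <= N)%nat ->
  digits_pos (beta_digits a n m N).
Proof.
  intros Ha HN i. unfold beta_digits.
  destruct (Nat.leb_spec i n) as [Hi | _]; [apply Ha, Hi|].
  destruct (Nat.eqb i (n + m)); lia.
Qed.

Lemma beta_digits_at_N (a : nat -> nat) (n m N : nat) : (1 <= m)%nat ->
  beta_digits a n m N (n + m) = N.
Proof.
  intro Hm. unfold beta_digits.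
  destruct (Nat.leb_spec (n + m) n) as [Hle | _]; [lia|].
  rewrite Nat.eqb_refl. reflexivity.
Qed.

Lemma beta_digits_below_N (a : nat -> nat) (n m N N' i : nat) : (i < n + m)%nat ->
  beta_digits a n m N i = beta_digits a n m N' i.
Proof.
  intro Hi. unfold beta_digits.
  destruct (i <=? n)%nat; [reflexivity|].
  destruct (Nat.eqb_spec i (n + m)); [lia | reflexivity].
Qed.

Lemma ln_INR_unbounded (c M : R) : 0 < c ->
  exists N0 : nat, forall N : nat, (N0 <= N)%nat -> M < c * ln (INR N).
Proof.
  intro Hc.
  destruct (nfloor_ex (exp (M / c))) as [N0 HN0]; [left; apply exp_pos|].
  exists (S N0). intros N HN.
  apply le_INR in HN. rewrite S_INR in HN.
  assert (Hln : M / c < ln (INR N)).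
  { rewrite <- (ln_exp (M / c)). apply ln_increasing; [apply exp_pos | lra]. }
  apply Rmult_lt_compat_l with (r := c) in Hln; [| exact Hc].
  replace (c * (M / c)) with M in Hln by (field; lra). exact Hln.
Qed.

Theorem mainTheorem10 (a : nat -> nat) (n m : nat)
  (Ha : forall i, (i <= n)%nat -> (0 < a i)%nat) (Hm : (1 <= m)%nat) :
  forall M : R, exists N0 : nat, forall N : nat, (N0 <= N)%nat ->
    Rbar_lt (Finite M) (Phi (beta_digits a n m N)).
Proof.
  intro M.
  set (c := prod_inv_succ_digits (beta_digits a n m 0) (n + m)).
  destruct (ln_INR_unbounded c M (prod_inv_succ_digits_pos _ _)) as [N0 HN0].
  exists (Nat.max 1 N0). intros N HN.
  assert (Hpos : digits_pos (beta_digits a n m N))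
    by (apply beta_digits_pos; [exact Ha | lia]).
  eapply Rbar_lt_le_trans; [| apply (Phi_ge_ln_digit _ Hpos (n + m))].
  rewrite beta_digits_at_N by exact Hm.
  rewrite (prod_inv_succ_digits_ext _ (beta_digits a n m 0))
    by (intros; apply beta_digits_below_N; assumption).
  apply HN0. lia.
Qed.
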